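(* Let $X$ be a real Hilbert space, let $\beta>\delta>0$, and let $T_1,T_2\colon X\to X$. Suppose $T_1$ is $\tfrac1\beta$-cocoercive and $T_2$ is $\tfrac1\delta$-cocoercive. Then $T_1-T_2$ is $\beta$-Lipschitz continuous.
   Context: For $\beta>0$, an operator $T\colon X\to X$ is $\tfrac1\beta$-cocoercive if there exists a nonexpansive $N\colon X\to X$ with $T=\tfrac\beta2(\mathrm{Id}+N)$ (equivalently, $\langle x-y,Tx-Ty\rangle\ge\tfrac1\beta\|Tx-Ty\|^2$ for all $x,y$). Nonexpansive means $1$-Lipschitz. *)

From Stdlib Require Import Reals.
Open Scope R_scope.

Record HilbertSpace := {
  hs_car :> Type;
  hs_zero : hs_car;
  hs_add : hs_car -> hs_car -> hs_car;
  hs_opp : hs_car -> hs_car;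
  hs_scal : R -> hs_car -> hs_car;
  hs_inner : hs_car -> hs_car -> R;
  hs_addA : forall x y z, hs_add x (hs_add y z) = hs_add (hs_add x y) z;
  hs_addC : forall x y, hs_add x y = hs_add y x;
  hs_add0 : forall x, hs_add x hs_zero = x;
  hs_addN : forall x, hs_add x (hs_opp x) = hs_zero;
  hs_scalA : forall a b x, hs_scal a (hs_scal b x) = hs_scal (a * b) x;
  hs_scal1 : forall x, hs_scal 1 x = x;
  hs_scalDr : forall a x y, hs_scal a (hs_add x y) = hs_add (hs_scal a x) (hs_scal a y);
  hs_scalDl : forall a b x, hs_scal (a + b) x = hs_add (hs_scal a x) (hs_scal b x);
  hs_innerC : forall x y, hs_inner x y = hs_inner y x;
  hs_innerDl : forall x y z, hs_inner (hs_add x y) z = hs_inner x z + hs_inner y z;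
  hs_innerZl : forall a x y, hs_inner (hs_scal a x) y = a * hs_inner x y;
  hs_inner_ge0 : forall x, 0 <= hs_inner x x;
  hs_inner_eq0 : forall x, hs_inner x x = 0 -> x = hs_zero;
  hs_complete : forall u : nat -> hs_car,
    (forall eps, eps > 0 -> exists N, forall m n, (m >= N)%nat -> (n >= N)%nat ->
       sqrt (hs_inner (hs_add (u m) (hs_opp (u n))) (hs_add (u m) (hs_opp (u n)))) < eps) ->
    exists l, forall eps, eps > 0 -> exists N, forall n, (n >= N)%nat ->
       sqrt (hs_inner (hs_add (u n) (hs_opp l)) (hs_add (u n) (hs_opp l))) < eps
}.

Arguments hs_zero {h}.
Arguments hs_add {h}.
Arguments hs_opp {h}.
Arguments hs_scal {h}.
Arguments hs_inner {h}.

Definition hs_sub {X : HilbertSpace} (x y : X) : X := hs_add x (hs_opp y).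
Definition hs_norm {X : HilbertSpace} (x : X) : R := sqrt (hs_inner x x).

Definition lipschitz {X : HilbertSpace} (L : R) (T : X -> X) : Prop :=
  forall x y : X, hs_norm (hs_sub (T x) (T y)) <= L * hs_norm (hs_sub x y).

Definition nonexpansive {X : HilbertSpace} (N : X -> X) : Prop := lipschitz 1 N.

(* T is (1/beta)-cocoercive iff T = (beta/2)(Id + N) for some nonexpansive N. *)
Definition cocoercive {X : HilbertSpace} (beta : R) (T : X -> X) : Prop :=
  exists N : X -> X, nonexpansive N /\
    forall x : X, T x = hs_scal (beta / 2) (hs_add x (N x)).

(* Writing T1 = (beta/2)(Id + N1) and T2 = (delta/2)(Id + N2) gives
   T1 - T2 = ((beta - delta)/2) Id + (beta/2) N1 - (delta/2) N2,
   a combination of 1-Lipschitz maps whose Lipschitz constants add up to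
   (beta - delta)/2 + beta/2 + delta/2 = beta. *)
From Stdlib Require Import Reals Lra.
Open Scope R_scope.

Section HilbertAlgebra.
Variable X : HilbertSpace.

Lemma hs_add_idPr (a b : X) : hs_add a b = a -> b = hs_zero.
Proof.
  intro H.
  assert (E : hs_add (hs_opp a) (hs_add a b) = hs_add (hs_opp a) a) by now rewrite H.
  rewrite hs_addA, (hs_addC _ (hs_opp a) a), hs_addN, hs_addC, hs_add0 in E.
  exact E.
Qed.

Lemma hs_scal0 (x : X) : hs_scal 0 x = hs_zero.
Proof. apply (hs_add_idPr (hs_scal 0 x)). rewrite <- hs_scalDl. f_equal; ring. Qed.

Lemma hs_oppE (x : X) : hs_opp x = hs_scal (-1) x.
Proof.
  assert (E : hs_add x (hs_scal (-1) x) = hs_zero).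
  { rewrite <- (hs_scal1 _ x) at 1. rewrite <- hs_scalDl.
    replace (1 + -1) with 0 by ring. apply hs_scal0. }
  rewrite <- (hs_add0 _ (hs_opp x)), <- E, hs_addA, (hs_addC _ (hs_opp x) x),
    hs_addN, hs_addC, hs_add0.
  reflexivity.
Qed.

Lemma hs_addACA (a b c d : X) :
  hs_add (hs_add a b) (hs_add c d) = hs_add (hs_add a c) (hs_add b d).
Proof. rewrite <- !hs_addA. f_equal. rewrite !hs_addA. f_equal. apply hs_addC. Qed.

Lemma hs_subDD (a b c d : X) :
  hs_sub (hs_add a b) (hs_add c d) = hs_add (hs_sub a c) (hs_sub b d).
Proof. unfold hs_sub. rewrite !hs_oppE, hs_scalDr. apply hs_addACA. Qed.

Lemma hs_subZ k (x y : X) : hs_sub (hs_scal k x) (hs_scal k y) = hs_scal k (hs_sub x y).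
Proof. unfold hs_sub. rewrite !hs_oppE, hs_scalDr, !hs_scalA. do 2 f_equal. ring. Qed.

Lemma hs_inner0l (v : X) : hs_inner hs_zero v = 0.
Proof. rewrite <- (hs_scal0 hs_zero), hs_innerZl. ring. Qed.

Lemma hs_innerDr (x y z : X) : hs_inner x (hs_add y z) = hs_inner x y + hs_inner x z.
Proof. rewrite hs_innerC, hs_innerDl, (hs_innerC _ y), (hs_innerC _ z). reflexivity. Qed.

Lemma hs_innerZr a (x y : X) : hs_inner x (hs_scal a y) = a * hs_inner x y.
Proof. rewrite hs_innerC, hs_innerZl, hs_innerC. reflexivity. Qed.

Lemma hs_norm_ge0 (x : X) : 0 <= hs_norm x.
Proof. apply sqrt_pos. Qed.

Lemma hs_normM (x : X) : hs_norm x * hs_norm x = hs_inner x x.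
Proof. apply sqrt_sqrt, hs_inner_ge0. Qed.

Lemma hs_normZ a (x : X) : hs_norm (hs_scal a x) = Rabs a * hs_norm x.
Proof.
  unfold hs_norm. rewrite hs_innerZl, hs_innerZr, <- Rmult_assoc, sqrt_mult_alt.
  - f_equal. apply sqrt_Rsqr_abs.
  - apply Rle_0_sqr.
Qed.

Lemma hs_inner_eq0_norm (u v : X) : hs_norm u = 0 -> hs_inner u v = 0.
Proof.
  intro Hu.
  assert (Huu : hs_inner u u = 0) by (rewrite <- hs_normM, Hu; ring).
  rewrite (hs_inner_eq0 _ u Huu). apply hs_inner0l.
Qed.

(* Expand 0 <= <q u - p v, q u - p v> with p = |u|, q = |v|: it gives
   2 p q (p q - <u, v>) >= 0. *)
Lemma hs_cauchy_schwarz (u v : X) : hs_inner u v <= hs_norm u * hs_norm v.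
Proof.
  set (p := hs_norm u). set (q := hs_norm v).
  assert (Hp : p * p = hs_inner u u) by apply hs_normM.
  assert (Hq : q * q = hs_inner v v) by apply hs_normM.
  assert (Hp0 : 0 <= p) by apply hs_norm_ge0.
  assert (Hq0 : 0 <= q) by apply hs_norm_ge0.
  assert (Hexp := hs_inner_ge0 _ (hs_add (hs_scal q u) (hs_scal (-p) v))).
  rewrite !hs_innerDl, !hs_innerDr, !hs_innerZl, !hs_innerZr, (hs_innerC _ v u),
    <- Hp, <- Hq in Hexp.
  destruct (Rle_lt_or_eq_dec 0 (p * q)) as [Hpos | Hzero].
  - now apply Rmult_le_pos.
  - assert (0 <= p * q * (p * q - hs_inner u v)) by nra.
    assert (0 <= p * q - hs_inner u v) by (apply (Rmult_le_reg_l (p * q)); lra).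
    lra.
  - rewrite <- Hzero.
    destruct (Rmult_integral _ _ (eq_sym Hzero)) as [E | E].
    + rewrite (hs_inner_eq0_norm u v E). lra.
    + rewrite hs_innerC, (hs_inner_eq0_norm v u E). lra.
Qed.

Lemma hs_norm_triangle (u v : X) : hs_norm (hs_add u v) <= hs_norm u + hs_norm v.
Proof.
  assert (C := hs_cauchy_schwarz u v).
  assert (Hu := hs_normM u). assert (Hv := hs_normM v).
  assert (Hu0 := hs_norm_ge0 u). assert (Hv0 := hs_norm_ge0 v).
  unfold hs_norm at 1.
  rewrite <- (sqrt_square (hs_norm u + hs_norm v)) by lra.
  apply sqrt_le_1_alt.
  rewrite !hs_innerDl, !hs_innerDr, (hs_innerC _ v u).
  nra.
Qed.

End HilbertAlgebra.

Section LipschitzCalculus.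
Variable X : HilbertSpace.

Lemma lipschitz_id : @lipschitz X 1 (fun x => x).
Proof. intros x y. lra. Qed.

Lemma lipschitzZ (a L : R) (T : X -> X) :
  lipschitz L T -> lipschitz (Rabs a * L) (fun x => hs_scal a (T x)).
Proof.
  intros HT x y.
  rewrite hs_subZ, hs_normZ, Rmult_assoc.
  apply Rmult_le_compat_l; [apply Rabs_pos | apply HT].
Qed.

Lemma lipschitzD (L1 L2 : R) (T1 T2 : X -> X) :
  lipschitz L1 T1 -> lipschitz L2 T2 ->
  lipschitz (L1 + L2) (fun x => hs_add (T1 x) (T2 x)).
Proof.
  intros H1 H2 x y.
  rewrite hs_subDD, Rmult_plus_distr_r.
  eapply Rle_trans; [apply hs_norm_triangle | apply Rplus_le_compat; auto].
Qed.

Lemma lipschitz_ext (L : R) (T S : X -> X) :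
  (forall x, T x = S x) -> lipschitz L S -> lipschitz L T.
Proof. intros E HS x y. rewrite !E. apply HS. Qed.

Lemma cocoercive_sub_decomposition (beta delta : R) (N1 N2 : X -> X) (x : X) :
  hs_sub (hs_scal (beta / 2) (hs_add x (N1 x))) (hs_scal (delta / 2) (hs_add x (N2 x))) =
  hs_add (hs_scal ((beta - delta) / 2) x)
         (hs_add (hs_scal (beta / 2) (N1 x)) (hs_scal (- (delta / 2)) (N2 x))).
Proof.
  unfold hs_sub. rewrite hs_oppE, !hs_scalDr, !hs_scalA, hs_addACA, <- hs_scalDl.
  f_equal; [f_equal; field | do 2 f_equal; ring].
Qed.

Lemma lipschitz_cocoercive_sub (beta delta : R) (T1 T2 : X -> X) :
  0 <= delta <= beta -> cocoercive beta T1 -> cocoercive delta T2 ->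
  lipschitz beta (fun x => hs_sub (T1 x) (T2 x)).
Proof.
  intros Hbd [N1 [HN1 E1]] [N2 [HN2 E2]].
  eapply lipschitz_ext.
  { intro x. rewrite E1, E2. apply cocoercive_sub_decomposition. }
  replace beta with (Rabs ((beta - delta) / 2) * 1
                     + (Rabs (beta / 2) * 1 + Rabs (- (delta / 2)) * 1)) at 1.
  - apply lipschitzD; [apply lipschitzZ, lipschitz_id |].
    apply lipschitzD; apply lipschitzZ; assumption.
  - rewrite Rabs_Ropp, !Rabs_right by lra. field.
Qed.

End LipschitzCalculus.

Theorem mainTheorem3 (X : HilbertSpace) (beta delta : R) (T1 T2 : X -> X) :
  beta > delta -> delta > 0 ->
  cocoercive beta T1 -> cocoercive delta T2 ->
  lipschitz beta (fun x => hs_sub (T1 x) (T2 x)).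
Proof.
  intros Hbd Hd.
  apply lipschitz_cocoercive_sub. lra.
Qed.
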